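(* Let $S\subseteq[12]$ be such that $\mathsf{MAIS}(G^*_S)<\alpha(G^*_{S,u})$. Then for any valid index code for the problem $\mathcal{B}^*_S$ with locality $1$, whose receivers $u_1,u_2,u_3$ observe codeword symbols indexed by $R_1,R_2,R_3$ respectively, we have $|R_i\cap R_j|=0$ for every $1\le i<j\le3$.
   Context: Index coding model. A unicast index coding problem has receivers $u_1,\dots,u_n$ and messages $\mathbf{x}_j$, each a vector in $\mathcal{A}^m$ for a finite alphabet $\mathcal{A}$ and positive integer $m$. Receiver $u_i$ demands $\mathbf{x}_j$, $j\in W_i$, and knows $\mathbf{x}_j$, $j\in K_i$, with $W_i\cap K_i=\emptyset$, the $W_i$ pairwise disjoint and every message demanded by exactly one receiver. An index code consists of an encoder mapping the messages to a codeword $\mathbf{c}\in\mathcal{A}^\ell$, subsets $R_i\subseteq[\ell]$ (receiver $u_i$ observes only $\mathbf{c}_{R_i}$), and decoders at each $u_i$ mapping $(\mathbf{c}_{R_i},\mathbf{x}_{K_i})$ to $\mathbf{x}_{W_i}$; it is valid if every receiver decodes correctly for all message values. The locality at $u_i$ is $|R_i|/(m|W_i|)$ and the locality of the code is the maximum over receivers (receivers with no demand impose no constraint). The problem $\mathcal{B}^*$ has three receivers and 12 messages with $W_1=\{1,2,3,4\}$, $W_2=\{5,6,7,8\}$, $W_3=\{9,10,11,12\}$, $K_1=\{5,6,9,10\}$, $K_2=\{1,2,9,11\}$, $K_3=\{1,3,5,7\}$. For $S\subseteq[12]$, $\mathcal{B}^*_S$ is the sub-problem with receivers $u_1,u_2,u_3$,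 messages $\mathbf{x}_j$, $j\in S$, demand sets $W_i\cap S$ and side information sets $K_i\cap S$. $G^*$ is the directed graph on $[12]$ with a directed edge $(a,b)$ iff $b\in K_i$ where $a\in W_i$; $G^*_u$ is the undirected graph on $[12]$ with $\{a,b\}$ an edge iff both $(a,b)$ and $(b,a)$ are edges of $G^*$; $G^*_S$, $G^*_{S,u}$ are the subgraphs induced by $S$. $\mathsf{MAIS}(D)$ is the maximum number of vertices of an acyclic induced subgraph of a directed graph $D$; $\alpha$ is the independence number. *)

From HB Require Import structures.
From mathcomp Require Import all_boot all_order all_algebra.
Set Implicit Arguments. Unset Strict Implicit. Unset Printing Implicit Defensive.
Import Order.TTheory GRing.Theory Num.Theory.

(* Messages 1..12 are represented by 'I_12 (message j+1 is the ordinal j);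
   receivers u_1,u_2,u_3 by 'I_3 (u_(i+1) is the ordinal i). *)

Definition Wn (i : nat) : seq nat :=
  match i with 1 => [:: 1; 2; 3; 4] | 2 => [:: 5; 6; 7; 8]
             | 3 => [:: 9; 10; 11; 12] | _ => [::] end.
Definition Kn (i : nat) : seq nat :=
  match i with 1 => [:: 5; 6; 9; 10] | 2 => [:: 1; 2; 9; 11]
             | 3 => [:: 1; 3; 5; 7] | _ => [::] end.

Definition W (i : 'I_3) : {set 'I_12} := [set j : 'I_12 | j.+1 \in Wn i.+1].
Definition K (i : 'I_3) : {set 'I_12} := [set j : 'I_12 | j.+1 \in Kn i.+1].

Definition Gedge : rel 'I_12 :=
  fun a b => [exists i : 'I_3, (a \in W i) && (b \in K i)].

Definition Guedge : rel 'I_12 := fun a b => Gedge a b && Gedge b a.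

Definition Gedge_on (T : {set 'I_12}) : rel 'I_12 :=
  fun a b => [&& a \in T, b \in T & Gedge a b].

Definition has_cycle (T : {set 'I_12}) : bool :=
  [exists a, exists b, Gedge_on T a b && connect (Gedge_on T) b a].

Definition acyclic (T : {set 'I_12}) : bool := ~~ has_cycle T.

Definition MAIS (S : {set 'I_12}) : nat :=
  \max_(T : {set 'I_12} | (T \subset S) && acyclic T) #|T|.

Definition independent (I : {set 'I_12}) : bool :=
  [forall a in I, forall b in I, ~~ Guedge a b].

Definition alpha (S : {set 'I_12}) : nat :=
  \max_(I : {set 'I_12} | (I \subset S) && independent I) #|I|.

Definition msgs (S : {set 'I_12}) (A : Type) (m : nat) : Type :=
  {j : 'I_12 | j \in S} -> 'I_m -> A.

Definition decoder_ok (S : {set 'I_12}) (A : Type) (m l : nat)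
    (E : msgs S A m -> 'I_l -> A) (Ri : {set 'I_l}) (i : 'I_3)
    (D : ('I_l -> A) -> msgs S A m -> msgs S A m) : Prop :=
  (forall (c c' : 'I_l -> A) (x x' : msgs S A m),
      (forall r, r \in Ri -> c r = c' r) ->
      (forall j, val j \in K i -> x j = x' j) ->
      forall j k, val j \in W i -> D c x j k = D c' x' j k) /\
  (forall (x : msgs S A m) j k, val j \in W i -> D (E x) x j k = x j k).

Definition valid_code (S : {set 'I_12}) (A : Type) (m l : nat)
    (E : msgs S A m -> 'I_l -> A) (R : 'I_3 -> {set 'I_l}) : Prop :=
  forall i : 'I_3, exists D, decoder_ok E (R i) i D.

Definition locality (S : {set 'I_12}) (m l : nat) (R : 'I_3 -> {set 'I_l})
  : rat :=
  \big[Num.max/0%R]_(i : 'I_3 | W i :&: S != set0)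
     ((#|R i|%:R : rat) / ((m * #|W i :&: S|)%:R : rat))%R.

(* The messages 4, 8, 12 belong to no side-information set, and
   {2, 7, 10}, {3, 6, 11} are directed triangles of G* that are independent in
   G*_u.  An exhaustive search over the independent sets I of G*_u shows that
   either I is acyclic in G* (witnessed by a ranking of the receivers that
   decreases along every edge), or I lies between a triangle t and
   t ∪ {4, 8, 12} and every message outside t ∪ {4, 8, 12} can be swapped into
   I against one of its elements keeping it acyclic.  For a maximum
   independent set of G*_{S,u}, MAIS < α rules out the first case, and also
   any message of S outside t ∪ {4, 8, 12}, since swapping it in would give
   an acyclic subset of S of size α; so t ⊆ S ⊆ t ∪ {4, 8, 12}.  Hence every
   receiver demands some message of S, and for any two receivers i < j one of
   them, k, knows every message of S that both i and j demand or know.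

   Locality 1 gives |R_i| <= m |W_i ∩ S|; as the demanded
   messages can be decoded from c_{R_i} and the side information, counting
   makes x_{W_i} ↦ c_{R_i} a bijection for fixed other messages.  So c_{R_i}
   depends only on x_{W_i ∪ K_i}, and any value of a symbol of R_i is reached
   by changing x_{W_i} alone.  For r ∈ R_i ∩ R_j, change x_{W_k} so that c_r
   changes, but apply the change only on W_i ∪ K_i: receiver i sees no
   difference, and neither does j, since a changed message lying in
   W_j ∪ K_j would be both demanded and known by k. *)

From HB Require Import structures.
From mathcomp Require Import all_boot all_order all_algebra.
Set Implicit Arguments. Unset Strict Implicit. Unset Printing Implicit Defensive.
Import Order.TTheory GRing.Theory Num.Theory.

Notation messages := (iota 0 12).

Lemma mem_iota_ord n (a : 'I_n) : nat_of_ord a \in iota 0 n.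
Proof. by rewrite mem_iota ltn_ord. Qed.

Lemma ord_of_mem_iota n k : k \in iota 0 n -> exists a : 'I_n, k = a.
Proof. by rewrite mem_iota => /andP [_ lt_kn]; exists (Ordinal lt_kn). Qed.

Lemma W_K_disjoint (i : 'I_3) (a : 'I_12) : a \in K i -> a \notin W i.
Proof.
have disjoint : all (fun i => all (fun a =>
  (a.+1 \in Kn i.+1) ==> (a.+1 \notin Wn i.+1)) messages) (iota 0 3) by [].
rewrite !inE; apply/implyP.
by move/allP: (allP disjoint i (mem_iota_ord i)); apply; apply: mem_iota_ord.
Qed.

Definition gedge_nat (a b : nat) : bool :=
  has (fun i => (a.+1 \in Wn i.+1) && (b.+1 \in Kn i.+1)) (iota 0 3).

Lemma GedgeE (a b : 'I_12) : Gedge a b = gedge_nat a b.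
Proof.
apply/existsP/hasP => [[i] | [_ /ord_of_mem_iota [i ->] ab]].
  by rewrite !inE => ab; exists (val i); first exact: mem_iota_ord.
by exists i; rewrite !inE.
Qed.

(* [vm_compute] cannot evaluate finset operations, so sets of messages are
   also handled as boolean predicates on the message numbers 0, ..., 11. *)
Definition represents (mem : nat -> bool) (T : {set 'I_12}) : Prop :=
  forall a : 'I_12, mem a = (a \in T).

Fixpoint bitseqs n : seq bitseq :=
  if n is n'.+1 then [seq b :: s | b <- [:: true; false], s <- bitseqs n']
  else [:: [::]].

Lemma mem_bitseqs s : s \in bitseqs (size s).
Proof.
elim: s => [|b s IHs] //=.
by case: b; rewrite !mem_cat ?orbF; apply/orP; [left | right]; apply: map_f.
Qed.

Lemma represented (T : {set 'I_12}) :
  exists2 bs, bs \in bitseqs 12 & represents (nth false bs) T.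
Proof.
pose bs := mkseq (fun n => insubd ord0 n \in T) 12.
exists bs; first by have := mem_bitseqs bs; rewrite size_mkseq.
by move=> a; rewrite nth_mkseq ?ltn_ord // valKd.
Qed.

Definition edges_nat : seq (nat * nat) :=
  [seq (a, b) | a <- messages, b <- [seq b <- messages | gedge_nat a b]].

Lemma ord_of_mem_edges_nat e :
  e \in edges_nat -> exists a b : 'I_12, e = (nat_of_ord a, nat_of_ord b).
Proof.
case/allpairsPdep => x [y [/ord_of_mem_iota [a ->]]].
by rewrite mem_filter => /andP [_ /ord_of_mem_iota [b ->]] ->; exists a, b.
Qed.

Lemma mem_edges_nat (a b : 'I_12) :
  ((nat_of_ord a, nat_of_ord b) \in edges_nat) = Gedge a b.
Proof.
rewrite GedgeE; apply/allpairsPdep/idP => [[x [y [_]]] | ab].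
  by rewrite mem_filter => /andP [ab _] [-> ->].
by exists (nat_of_ord a), (nat_of_ord b); rewrite mem_filter ab !mem_iota_ord.
Qed.

Definition independent_nat (mem : nat -> bool) : bool :=
  all (fun e => ~~ [&& mem e.1, mem e.2 & gedge_nat e.2 e.1]) edges_nat.

Lemma represents_independent mem I :
  represents mem I -> independent I -> independent_nat mem.
Proof.
move=> memI /forallP indI; apply/allP => _ /[dup] /ord_of_mem_edges_nat [a [b ->]].
rewrite mem_edges_nat /= !memI -GedgeE => ab; apply/and3P => [[aI bI ba]].
by move: (indI a); rewrite aI => /forallP /(_ b); rewrite bI /Guedge ab ba.
Qed.

Lemma acyclic_of_rank (T : {set 'I_12}) (rank : 'I_12 -> nat) :
  {in T &, forall a b, Gedge a b -> rank b < rank a} -> acyclic T.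
Proof.
move=> rank_dec.
have edge_lt a b : Gedge_on T a b -> rank b < rank a.
  by case/and3P => aT bT; apply: rank_dec.
have connect_le a b : connect (Gedge_on T) a b -> rank b <= rank a.
  case/connectP => s + ->; elim: s a => //= c s IHs a /andP [ac cs].
  exact: leq_trans (IHs c cs) (ltnW (edge_lt a c ac)).
apply/existsP => [[a /existsP [b /andP [ab ba]]]].
by have := leq_ltn_trans (connect_le b a ba) (edge_lt a b ab); rewrite ltnn.
Qed.

(* Message [a] (counted from 0) is demanded by receiver [a %/ 4]; the
   certificate [r] ranks the receivers so that every edge goes down. *)
Definition ranked_nat (mem : nat -> bool) : bool :=
  has (fun r => all (fun e =>
    mem e.1 && mem e.2 ==> (nth 0 r (e.2 %/ 4) < nth 0 r (e.1 %/ 4))) edges_nat)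
  (permutations (iota 0 3)).

Lemma ranked_acyclic mem T : represents mem T -> ranked_nat mem -> acyclic T.
Proof.
move=> memT /hasP [r _ /allP r_dec].
apply: (@acyclic_of_rank T (fun a => nth 0 r (a %/ 4))) => a b aT bT ab.
by have := r_dec _ (etrans (mem_edges_nat a b) ab); rewrite /= !memT aT bT.
Qed.

Lemma acyclic_leq_MAIS (S T : {set 'I_12}) :
  T \subset S -> acyclic T -> #|T| <= MAIS S.
Proof.
move=> TS acT; have := @leq_bigmax_cond _
  (fun U : {set 'I_12} => (U \subset S) && acyclic U) (fun U => #|U|) T.
by rewrite TS acT; apply.
Qed.

Lemma alpha_attained (S : {set 'I_12}) :
  exists2 I : {set 'I_12}, (I \subset S) && independent I & #|I| = alpha S.
Proof.
have [|I PI maxI] := @eq_bigmax_cond _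
  (fun I : {set 'I_12} => (I \subset S) && independent I) (fun I : {set 'I_12} => #|I|).
  apply/card_gt0P; exists set0; rewrite unfold_in /= sub0set.
  by apply/forall_inP => a; rewrite inE.
by exists I.
Qed.

Definition sources : seq nat := [:: 4; 8; 12].
Definition triangles : seq (seq nat) := [:: [:: 2; 7; 10]; [:: 3; 6; 11]].
Definition msgset (s : seq nat) : {set 'I_12} := [set a : 'I_12 | a.+1 \in s].

Definition sandwiched_nat (t : seq nat) (mem : nat -> bool) : bool :=
  all (fun a => ((a.+1 \in t) ==> mem a) && (mem a ==> (a.+1 \in t ++ sources))) messages.

Definition exchangeable_nat (mem : nat -> bool) (y : nat) : bool :=
  has (fun z => mem z && ranked_nat (fun n => (mem n || (n == y)) && (n != z))) messages.

Definition outsiders_exchangeable_nat (t : seq nat) (mem : nat -> bool) : bool :=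
  all (fun y => (y.+1 \in t ++ sources) || exchangeable_nat mem y) messages.

(* The filters keep [vm_compute], which evaluates eagerly, from running the
   expensive tests on the masks that are discarded anyway. *)
Lemma independent_sets_classified :
  all (fun bs => let mem := nth false bs in
         ranked_nat mem
         || has (outsiders_exchangeable_nat^~ mem)
                [seq t <- triangles | sandwiched_nat t mem])
      [seq bs <- bitseqs 12 | independent_nat (nth false bs)].
Proof. by vm_compute. Qed.

Lemma sandwich_of_exchange (S I : {set 'I_12}) mem t :
  represents mem I -> I \subset S -> MAIS S < #|I| -> sandwiched_nat t mem ->
  outsiders_exchangeable_nat t mem -> msgset t \subset S /\ S \subset msgset (t ++ sources).
Proof.
move=> memI IS lt_MI /allP sandw /allP exch.
have [tI It] : msgset t \subset I /\ I \subset msgset (t ++ sources).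
  by split; apply/subsetP => a; rewrite !inE -memI;
     have /andP [/implyP ? /implyP ?] := sandw a (mem_iota_ord a).
split; first exact: subset_trans tI IS.
apply/subsetP => y yS; rewrite inE; apply/negPn/negP => y_out.
have yI : y \notin I by apply: contra y_out => /(subsetP It); rewrite inE.
have := exch y (mem_iota_ord y); rewrite (negbTE y_out) orFb.
case/hasP => _ /ord_of_mem_iota [z ->] /andP [zI ranked_swap].
have acT : acyclic ((y |: I) :\ z).
  by apply: ranked_acyclic ranked_swap => a; rewrite !inE memI orbC andbC.
have TS : (y |: I) :\ z \subset S.
  by apply/subsetP => a; rewrite !inE => /andP [_ /orP [/eqP -> | /(subsetP IS)]].
have cardT : #|(y |: I) :\ z| = #|I|.
  have zyI : z \in y |: I by rewrite !inE -memI zI orbT.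
  by move: (cardsD1 z (y |: I)); rewrite zyI cardsU1 yI => /addnI ->.
by have := acyclic_leq_MAIS TS acT; rewrite cardT leqNgt lt_MI.
Qed.

Lemma MAIS_lt_alpha_sandwich (S : {set 'I_12}) : MAIS S < alpha S ->
  exists2 t, t \in triangles & msgset t \subset S /\ S \subset msgset (t ++ sources).
Proof.
move=> lt_MA; have [I /andP [IS indI] cardI] := alpha_attained S.
rewrite -cardI in lt_MA; have [bs bs12 memI] := represented I.
have /allP /(_ bs) := independent_sets_classified.
rewrite mem_filter (represents_independent memI indI) bs12 => /(_ isT) /orP [ranked | ].
  by have := acyclic_leq_MAIS IS (ranked_acyclic memI ranked); rewrite leqNgt lt_MA.
case/hasP => t; rewrite mem_filter => /andP [sandw tri] exch.
by exists t => //; exact: sandwich_of_exchange memI IS lt_MA sandw exch.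
Qed.

Lemma sandwich_meets_W (S : {set 'I_12}) t (c : 'I_3) :
  t \in triangles -> msgset t \subset S -> W c :&: S != set0.
Proof.
have meets : all (fun t => all (fun c =>
  has (fun a => (a.+1 \in Wn c.+1) && (a.+1 \in t)) messages) (iota 0 3)) triangles by [].
move=> /(allP meets) /allP /(_ c (mem_iota_ord c)).
case/hasP => _ /ord_of_mem_iota [a ->] /andP [aW a_t] tS; apply/set0Pn; exists a.
by rewrite in_setI (subsetP tS) inE ?aW.
Qed.

Lemma sandwich_shared_known (S : {set 'I_12}) t (i j : 'I_3) :
  t \in triangles -> S \subset msgset (t ++ sources) -> i < j ->
  exists2 k, k \in [:: i; j] & (W i :|: K i) :&: (W j :|: K j) :&: S \subset K k.
Proof.
pose known_by t i j k := all (fun a => [&& a.+1 \in t ++ sources,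
  (a.+1 \in Wn i.+1) || (a.+1 \in Kn i.+1) & (a.+1 \in Wn j.+1) || (a.+1 \in Kn j.+1)]
  ==> (a.+1 \in Kn k.+1)) messages.
have shared : all (fun t => all (fun i => all (fun j =>
  (i < j) ==> known_by t i j i || known_by t i j j) (iota 0 3)) (iota 0 3)) triangles by [].
move=> tri St ij.
have sub_K (k : 'I_3) : known_by t i j k ->
    (W i :|: K i) :&: (W j :|: K j) :&: S \subset K k.
  move=> /allP known; apply/subsetP => a; rewrite !inE.
  case/andP => /andP [aWKi aWKj] /(subsetP St); rewrite inE => a_ts.
  by apply: (implyP (known a (mem_iota_ord a))); rewrite a_ts aWKi aWKj.
have := allP (allP (allP shared t tri) i (mem_iota_ord i)) j (mem_iota_ord j).
rewrite ij => /orP [/sub_K sub | /sub_K sub]; [exists i | exists j] => //.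
  by rewrite mem_head.
by rewrite mem_seq2 eqxx orbT.
Qed.

Section Decoding.

Variables (S : {set 'I_12}) (A : finType) (m l : nat) (E : msgs S A m -> 'I_l -> A).
Variables (i : 'I_3) (Ri : {set 'I_l}) (D : ('I_l -> A) -> msgs S A m -> msgs S A m).
Hypothesis decD : decoder_ok E Ri i D.

Definition demand := {j : 'I_12 | j \in W i :&: S}.

Definition with_demand (x : msgs S A m) (p : {ffun demand * 'I_m -> A}) : msgs S A m :=
  fun j k => if insub (val j) : option demand is Some j' then p (j', k) else x j k.

Lemma with_demand_out x p j : val j \notin W i -> with_demand x p j = x j.
Proof. by move=> jW; rewrite /with_demand insubN // inE (negbTE jW). Qed.

Lemma with_demand_in x p j (j' : demand) k :
  val j = val j' -> with_demand x p j k = p (j', k).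
Proof.
rewrite /with_demand => jj'; case: insubP => [u _ uj | ]; last by rewrite jj' (valP j').
by congr (p (_, k)); apply: val_inj; rewrite uj jj'.
Qed.

Lemma with_demand_inj x p p' :
  (forall j k, val j \in W i -> with_demand x p j k = with_demand x p' j k) -> p = p'.
Proof.
move=> pp'; apply/ffunP => [[j' k]]; have /setIP [jW jS] := valP j'.
by have := pp' (exist _ (val j') jS) k jW; rewrite !(@with_demand_in _ _ _ j').
Qed.

Definition observe (c : 'I_l -> A) : {ffun {r : 'I_l | r \in Ri} -> A} :=
  [ffun r => c (val r)].

Lemma observe_eq_in c c' : observe c = observe c' -> {in Ri, c =1 c'}.
Proof. by move=> /ffunP cc' r r_in; have := cc' (exist _ r r_in); rewrite !ffunE. Qed.

Lemma decoder_observe c c' x x' j k :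
  observe c = observe c' -> (forall j, val j \in K i -> x j = x' j) ->
  val j \in W i -> D c x j k = D c' x' j k.
Proof. by case: decD => D_local _ /observe_eq_in cc' xx'; apply: D_local. Qed.

Lemma decode_with_demand x p j k :
  val j \in W i -> D (E (with_demand x p)) x j k = with_demand x p j k.
Proof.
case: decD => D_local D_correct jW; rewrite -(D_correct (with_demand x p) j k jW).
by apply: D_local => // j0 j0K; rewrite with_demand_out // W_K_disjoint.
Qed.

Lemma encode_demand_inj x : injective (fun p => observe (E (with_demand x p))).
Proof.
move=> p p' obs; apply: (@with_demand_inj x) => j k jW.
by rewrite -!decode_with_demand //; apply: decoder_observe.
Qed.

Hypotheses (A_gt0 : 0 < #|A|) (Ri_small : #|Ri| <= m * #|W i :&: S|).

Lemma encode_demand_onto x q : exists p, observe (E (with_demand x p)) = q.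
Proof.
have card_le : #|{ffun {r : 'I_l | r \in Ri} -> A}| <= #|{ffun demand * 'I_m -> A}|.
  rewrite !card_ffun card_prod !card_sig card_ord leq_pexp2l // mulnC.
  by rewrite (eq_card (B := W i :&: S)) // (eq_card (B := Ri)).
have /codomP [p ->] := inj_card_onto (encode_demand_inj (x := x)) card_le q.
by exists p.
Qed.

Lemma observe_local x x' :
  (forall j, val j \in W i :|: K i -> x j = x' j) -> observe (E x) = observe (E x').
Proof.
move=> xx'; case: decD => _ D_correct.
have [p obs_p] := encode_demand_onto x (observe (E x)).
have [p' obs_p'] := encode_demand_onto x (observe (E x')).
rewrite -obs_p -obs_p'; congr (observe (E (with_demand x _))).
apply: (@with_demand_inj x) => j k jW; rewrite -!decode_with_demand //.
transitivity (D (E x) x j k); first by apply: decoder_observe obs_p _ jW.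
transitivity (D (E x') x' j k); first by rewrite !D_correct // xx' // inE jW.
by apply: decoder_observe (esym obs_p') _ jW => j0 j0K; rewrite xx' // inE j0K orbT.
Qed.

Lemma observed_symbol_onto x r a : r \in Ri -> exists p, E (with_demand x p) r = a.
Proof.
move=> r_in; have [p /observe_eq_in /(_ r r_in)] := encode_demand_onto x (observe (fun=> a)).
by exists p.
Qed.

End Decoding.

Lemma locality_le1_card (S : {set 'I_12}) m l (R : 'I_3 -> {set 'I_l}) (c : 'I_3) :
  (locality S m R <= 1)%R -> 0 < m -> W c :&: S != set0 -> #|R c| <= m * #|W c :&: S|.
Proof.
move=> loc_le1 m_gt0 WcS.
have pos : (0 < (m * #|W c :&: S|)%:R :> rat)%R by rewrite ltr0n muln_gt0 m_gt0 card_gt0.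
have : ((#|R c|%:R : rat) / ((m * #|W c :&: S|)%:R) <= locality S m R)%R.
  rewrite /locality; exact: (le_bigmax_cond 0%R
    (fun c => ((#|R c|%:R : rat) / ((m * #|W c :&: S|)%:R))%R) WcS).
by move/le_trans/(_ loc_le1); rewrite ler_pdivrMr // mul1r ler_nat.
Qed.

Lemma observations_disjoint S (A : finType) m l (E : msgs S A m -> 'I_l -> A) R
    (i j k : 'I_3) :
  1 < #|A| -> valid_code E R -> (forall c, #|R c| <= m * #|W c :&: S|) ->
  k \in [:: i; j] -> (W i :|: K i) :&: (W j :|: K j) :&: S \subset K k ->
  R i :&: R j = set0.
Proof.
move=> A_gt1 code small kij shared_known; have A_gt0 : 0 < #|A| := ltnW A_gt1.
apply/setP => r; rewrite !inE; apply/negP => /andP [ri rj].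
have [[Di deci] [Dj decj] [Dk deck]] := And3 (code i) (code j) (code k).
have [a0 _] := card_gt0P A_gt0; pose x0 : msgs S A m := fun _ _ => a0.
have [a1 a1_new] : exists a1, a1 != E x0 r.
  have /card_gt0P [a1] : 0 < #|predC1 (E x0 r)| by rewrite cardC1 -subn1 subn_gt0.
  by exists a1.
have rk : r \in R k by move: kij; rewrite !inE => /orP [] /eqP ->.
have [p yr] := observed_symbol_onto deck A_gt0 (small k) x0 a1 rk.
pose y := with_demand x0 p.
(* [z] agrees with [y] on [W i :|: K i] and, by [shared_known], with [x0] on
   [W j :|: K j]. *)
pose z : msgs S A m := fun s => if val s \in W i :|: K i then y s else x0 s.
have yz : E y r = E z r.
  by apply: (observe_eq_in (observe_local deci A_gt0 (small i) _)) => // s si; rewrite /z si.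
have zx0 : E z r = E x0 r.
  apply: (observe_eq_in (observe_local decj A_gt0 (small j) _)) => // s sj.
  rewrite /z; case: ifP => // si; rewrite /y with_demand_out // W_K_disjoint //.
  by apply: (subsetP shared_known); rewrite !in_setI si sj (valP s).
by move: a1_new; rewrite -yr -/y yz zx0 eqxx.
Qed.

Unset Implicit Arguments.

Theorem lemma5 (S : {set 'I_12}) (A : finType) (m l : nat)
    (E : msgs S A m -> 'I_l -> A) (R : 'I_3 -> {set 'I_l}) :
  MAIS S < alpha S ->
  0 < m ->
  1 < #|A| ->
  valid_code E R ->
  locality S m R = 1%R ->
  forall i j : 'I_3, i < j -> #|R i :&: R j| = 0.
Proof.
move=> lt_MAIS_alpha m_gt0 A_gt1 code loc1 i j ij.
have [t tri [tS St]] := MAIS_lt_alpha_sandwich lt_MAIS_alpha.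
have small c : #|R c| <= m * #|W c :&: S|.
  by apply: locality_le1_card; rewrite ?loc1 //; apply: sandwich_meets_W tS.
have [k kij shared] := sandwich_shared_known tri St ij.
by rewrite (observations_disjoint A_gt1 code small kij shared) cards0.
Qed.
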